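(* Let $F\in\mathbb{C}[x]$ be a polynomial of degree $n\ge 2$, and let $\Delta$ be a disk in $\mathbb{C}$ that is $(\frac{1}{16n},16n^4)$-isolating for a set of $k$ roots of $F$ (counted with multiplicity). Then $T_k(\Delta,\frac32,F)$ holds.
   Context: $\Delta(m,r)$ denotes the open disk with center $m$ and radius $r>0$, and $\lambda\cdot\Delta(m,r):=\Delta(m,\lambda r)$. For $0<\rho_1\le 1\le\rho_2$ and a set $S$ of roots of $F$ (counted with multiplicity), a disk $\Delta$ is $(\rho_1,\rho_2)$-isolating for $S$ if $\rho_1\cdot\Delta$ contains exactly the roots in $S$ (with multiplicity) and $\rho_2\cdot\Delta\setminus\rho_1\cdot\Delta$ contains no root of $F$. The predicate $T_k(\Delta(m,r),K,F)$ holds iff $\left|\frac{F^{(k)}(m) r^k}{k!}\right|>K\sum_{i\neq k,\,0\le i\le n}\left|\frac{F^{(i)}(m)r^i}{i!}\right|$. *)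

(* Complex numbers are modelled by an arbitrary
   numClosedFieldType C (algebraically closed field with a norm). *)
From HB Require Import structures.
From mathcomp Require Import all_boot all_order all_algebra.
Set Implicit Arguments. Unset Strict Implicit. Unset Printing Implicit Defensive.
Import Order.TTheory GRing.Theory Num.Theory.
Local Open Scope ring_scope.

Definition in_disk (C : numClosedFieldType) (m : C) (r : C) (z : C) : bool :=
  `|z - m| < r.

(* Delta(m,r) is (rho1,rho2)-isolating for a set of k roots of F
   (counted with multiplicity): writing F = lc(F) * prod_(z <- rs) (X - z),
   exactly k elements of rs (with multiplicity) lie in rho1*Delta, and no
   root lies in rho2*Delta \ rho1*Delta. *)
Definition isolating (C : numClosedFieldType) (F : {poly C}) (k : nat)
    (m r rho1 rho2 : C) : Prop :=
  exists rs : seq C,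
    F = lead_coef F *: \prod_(z <- rs) ('X - z%:P) /\
    count (in_disk m (rho1 * r)) rs = k /\
    (forall z, z \in rs -> ~~ in_disk m (rho1 * r) z ->
                ~~ in_disk m (rho2 * r) z).

Definition Tk (C : numClosedFieldType) (k : nat) (m r K : C) (F : {poly C})
  : Prop :=
  `| (F^`(k)).[m] * r ^+ k / (k`!)%:R |>
    K * \sum_(i < (size F).-1.+1 | i != k :> nat)
          `| (F^`(i)).[m] * r ^+ i / (i`!)%:R |.

From HB Require Import structures.
From mathcomp Require Import all_boot all_order all_algebra.
From mathcomp Require Import ring.
Import Order.TTheory GRing.Theory Num.Theory.
Local Open Scope ring_scope.
Set Implicit Arguments. Unset Strict Implicit. Unset Printing Implicit Defensive.

(* Translating m to 0, the Taylor terms of F at m are the weighted coefficients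
   T_i r^i of T(x) = F(m + x) = lc(F) * prod_z (x - (z - m)).  Weigh
   polynomials by |Q| = sum_i |Q_i| r^i and let d = 1/(16n).  A factor x - a
   with |a| < d r is x up to a perturbation of relative size d, and a factor
   with r <= d |a| is the constant -a up to a perturbation of relative size d.
   Isolation says every root is of one of these two kinds, k of them of the
   first, so T = c (x^k + Q) with |Q| <= ((1 + d)^n - 1) r^k <= r^k / 8, and the
   k-th term then outweighs the others by more than 3/2. *)

Section WeightedNorm.
Variables (R : numDomainType) (N : nat) (r : R).
Hypothesis r_ge0 : 0 <= r.

(* Only the coefficients of index below N are counted; N = size F suffices. *)
Definition wnorm (p : {poly R}) : R := \sum_(i < N) `|p`_i| * r ^+ i.

Lemma wnorm_ge0 p : 0 <= wnorm p.
Proof. by apply: sumr_ge0 => i _; rewrite mulr_ge0 ?exprn_ge0. Qed.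

Lemma wnorm0 : wnorm 0 = 0.
Proof. by rewrite /wnorm big1 // => i _; rewrite coef0 normr0 mul0r. Qed.

Lemma wnormD p q : wnorm (p + q) <= wnorm p + wnorm q.
Proof.
rewrite /wnorm -big_split /=; apply: ler_sum => i _.
by rewrite coefD -mulrDl ler_wpM2r ?exprn_ge0 ?ler_normD.
Qed.

Lemma wnormN p : wnorm (- p) = wnorm p.
Proof. by apply: eq_bigr => i _; rewrite coefN normrN. Qed.

Lemma wnormB p q : wnorm (p - q) <= wnorm p + wnorm q.
Proof. by rewrite -(wnormN q) wnormD. Qed.

Lemma wnormZ a p : wnorm (a *: p) = `|a| * wnorm p.
Proof.
by rewrite /wnorm mulr_sumr; apply: eq_bigr => i _; rewrite coefZ normrM mulrA.
Qed.

Lemma wnormXM p : wnorm ('X * p) <= r * wnorm p.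
Proof.
rewrite /wnorm; case: N => [|N']; first by rewrite !big_ord0 mulr0.
rewrite big_ord_recl coefXM eqxx normr0 mul0r add0r.
rewrite [in leRHS]big_ord_recr /= mulrDr mulr_sumr ler_wpDr ?mulr_ge0 ?exprn_ge0 //.
rewrite le_eqVlt (eq_bigr (fun i : 'I_N' => r * (`|p`_i| * r ^+ i))) ?eqxx //.
by move=> i _; rewrite coefXM /= exprS mulrCA.
Qed.

Lemma wnormXn j : wnorm 'X^j <= r ^+ j.
Proof.
elim: j => [|j IH].
  rewrite /wnorm; case: N => [|N']; first by rewrite big_ord0 expr0 ler01.
  rewrite big_ord_recl coef1 eqxx normr1 mul1r big1 ?addr0 //.
  by move=> i _; rewrite coef1 normr0 mul0r.
by rewrite exprS; apply: le_trans (wnormXM _) _; rewrite exprS ler_wpM2l.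
Qed.

End WeightedNorm.

Section NearMonomial.
Variables (R : numFieldType) (N : nat) (r d : R).
Hypothesis r_gt0 : 0 < r.

Let r_ge0 : 0 <= r. Proof. exact: ltW. Qed.

Definition near_monomial (j : nat) (rho : R) (P : {poly R}) : Prop :=
  exists c Q, [/\ c != 0, P = c *: ('X^j + Q) & wnorm N r Q <= rho * r ^+ j].

Lemma near_monomial_mul_inner j rho a P : `|a| <= d * r ->
  near_monomial j rho P ->
  near_monomial j.+1 ((1 + d) * (1 + rho) - 1) (('X - a%:P) * P).
Proof.
move=> a_small [c [Q [c_neq0 -> Q_small]]].
exists c, ('X * Q - a *: 'X^j - a *: Q); split => //.
  by rewrite -!mul_polyC exprS; ring.
apply: le_trans (wnormB N r_ge0 _ _) _.
apply: le_trans (lerD (wnormB N r_ge0 _ _) (lexx _)) _; rewrite !wnormZ.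
apply: (@le_trans _ _ (r * (rho * r ^+ j) + d * r * r ^+ j + d * r * (rho * r ^+ j))).
  apply: lerD; first apply: lerD.
  - by apply: le_trans (wnormXM N r_ge0 _) _; rewrite ler_wpM2l.
  - by apply: ler_pM => //; rewrite ?(wnorm_ge0 N r_ge0) ?(wnormXn N r_ge0).
  - by apply: ler_pM; rewrite ?(wnorm_ge0 N r_ge0).
by rewrite exprS le_eqVlt; apply/orP; left; apply/eqP; ring.
Qed.

Lemma near_monomial_mul_outer j rho a P : r <= d * `|a| ->
  near_monomial j rho P ->
  near_monomial j ((1 + d) * (1 + rho) - 1) (('X - a%:P) * P).
Proof.
move=> a_large [c [Q [c_neq0 -> Q_small]]].
have a_neq0 : a != 0.
  by apply: contraTneq a_large => ->; rewrite normr0 mulr0 (lt_geF r_gt0).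
have inv_small : `|a^-1| * r <= d.
  by rewrite normfV mulrC ler_pdivrMr ?normr_gt0.
exists (c * - a), (Q - a^-1 *: 'X^(j.+1) - a^-1 *: ('X * Q)); split.
- by rewrite mulf_neq0 ?oppr_eq0.
- have aK : a%:P * a^-1%:P = 1 by rewrite -polyCM mulfV.
  rewrite -!mul_polyC polyCM polyCN.
  transitivity (c%:P * (- a%:P * ('X^j + Q) + a%:P * a^-1%:P * ('X * 'X^j + 'X * Q))).
    by rewrite aK; ring.
  by rewrite exprS; ring.
apply: le_trans (wnormB N r_ge0 _ _) _.
apply: le_trans (lerD (wnormB N r_ge0 _ _) (lexx _)) _; rewrite !wnormZ.
apply: (@le_trans _ _ (rho * r ^+ j + d * r ^+ j + d * (rho * r ^+ j))).
  apply: lerD; first apply: lerD => //.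
  - apply: le_trans (ler_wpM2l (normr_ge0 _) (wnormXn N r_ge0 _)) _.
    by rewrite exprS mulrA ler_wpM2r ?exprn_ge0.
  - apply: le_trans (ler_wpM2l (normr_ge0 _) (wnormXM N r_ge0 _)) _.
    by rewrite mulrA ler_pM ?mulr_ge0 ?(wnorm_ge0 N r_ge0).
by rewrite le_eqVlt; apply/orP; left; apply/eqP; ring.
Qed.

Lemma near_monomial_prod (s : seq R) :
  (forall a, a \in s -> `|a| < d * r \/ r <= d * `|a|) ->
  near_monomial (count (fun a => `|a| < d * r) s) ((1 + d) ^+ size s - 1)
    (\prod_(a <- s) ('X - a%:P)).
Proof.
elim: s => [|a s IH] s_split.
  exists 1, 0; split; rewrite ?oner_neq0 ?wnorm0 ?subrr ?mul0r //.
  by rewrite big_nil expr0 addr0 scale1r.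
have IHs := IH (fun b bs => s_split b (@mem_behead _ (a :: s) b bs)).
rewrite big_cons /= exprS -(subrK 1 ((1 + d) ^+ size s)) [_ - 1 + 1]addrC.
have [a_in | a_out] := boolP (`|a| < d * r).
  by rewrite add1n; apply: near_monomial_mul_inner (ltW a_in) IHs.
rewrite add0n; apply: near_monomial_mul_outer IHs.
by case: (s_split a (mem_head _ _)) => // a_in; rewrite a_in in a_out.
Qed.

Lemma near_monomial_scale a j rho P : a != 0 ->
  near_monomial j rho P -> near_monomial j rho (a *: P).
Proof.
move=> a_neq0 [c [Q [c_neq0 -> Q_small]]].
by exists (a * c), Q; rewrite scalerA mulf_neq0.
Qed.

Lemma near_monomial_dominant k rho P : (k < N)%N -> rho <= 1 / 8 ->
  near_monomial k rho P ->
  3 / 2 * \sum_(i < N | i != k :> nat) `|P`_i| * r ^+ i < `|P`_k| * r ^+ k.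
Proof.
move=> k_lt rho_small [e [Q [e_neq0 -> Q_small]]].
have coefP i :
    `|(e *: ('X^k + Q))`_i| * r ^+ i = `|e| * (`|(i == k)%:R + Q`_i| * r ^+ i).
  by rewrite coefZ coefD coefXn normrM mulrA.
set S := \sum_(i < N | i != k :> nat) `|Q`_i| * r ^+ i.
set q := `|Q`_k| * r ^+ k.
have wnormQ : wnorm N r Q = q + S by rewrite /wnorm (bigD1 (Ordinal k_lt)).
have -> : \sum_(i < N | i != k :> nat) `|(e *: ('X^k + Q))`_i| * r ^+ i
    = `|e| * S.
  by rewrite mulr_sumr; apply: eq_bigr => i ik; rewrite coefP (negbTE ik) add0r.
rewrite coefP eqxx mulrCA ltr_pM2l ?normr_gt0 //.
have Q_le : wnorm N r Q <= r ^+ k * (1 / 8).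
  by apply: le_trans Q_small _; rewrite mulrC ler_wpM2l ?exprn_ge0.
have q_S_small : 3 / 2 * S + q < r ^+ k.
  apply: (@le_lt_trans _ _ (3 / 2 * (r ^+ k * (1 / 8)))).
    apply: le_trans (_ : _ <= 3 / 2 * wnorm N r Q) _; last first.
      by rewrite ler_wpM2l ?divr_ge0 ?ler0n.
    rewrite wnormQ -subr_ge0 (_ : _ - _ = q / 2); last by field.
    by rewrite divr_ge0 ?mulr_ge0 ?exprn_ge0 ?ler0n.
  rewrite -subr_gt0 (_ : _ - _ = 13 / 16 * r ^+ k); last by field.
  by rewrite mulr_gt0 ?divr_gt0 ?ltr0n ?exprn_gt0.
apply: (@lt_le_trans _ _ (r ^+ k - q)); first by rewrite ltrBrDr.
rewrite -{1}(mul1r (r ^+ k)) -mulrBl ler_wpM2r ?exprn_ge0 //.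
by rewrite -{1}(normr1 R) lerB_normD.
Qed.

End NearMonomial.

Lemma expr1D_ub (R : numDomainType) (x : R) s : 0 <= x ->
  2 * (s%:R * x) <= 1 -> (1 + x) ^+ s <= 1 + 2 * (s%:R * x).
Proof.
move=> x_ge0; elim: s => [|s IH] sx_small; first by rewrite expr0 mul0r mulr0 addr0.
have sx_le : 2 * (s%:R * x) <= 1.
  by apply: le_trans sx_small; rewrite ler_wpM2l ?ler0n // ler_wpM2r // ler_nat.
rewrite exprS mulrC; apply: le_trans (ler_wpM2r _ (IH sx_le)) _.
  by rewrite addr_ge0.
rewrite -subr_ge0.
have -> : 1 + 2 * (s.+1%:R * x) - (1 + 2 * (s%:R * x)) * (1 + x) =
          x * (1 - 2 * (s%:R * x)) by rewrite mulrS; ring.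
by rewrite mulr_ge0 // subr_ge0.
Qed.

Lemma expr1D_inv16n_le (R : numFieldType) n : (0 < n)%N ->
  (1 + 1 / (16 * n%:R)) ^+ n - 1 <= 1 / 8 :> R.
Proof.
move=> n_gt0; set d := 1 / (16 * n%:R).
have nd : 2 * (n%:R * d) = 1 / 8 by rewrite /d; field; rewrite pnatr_eq0 -lt0n.
rewrite lerBlDl -nd; apply: expr1D_ub; first by rewrite divr_ge0 ?mulr_ge0 ?ler0n.
by rewrite nd ler_pdivrMr ?ltr0n // mul1r ler1n.
Qed.

Lemma taylor_coef (R : numFieldType) (F : {poly R}) (m : R) i :
  (F \Po ('X + m%:P))`_i = (F^`(i)).[m] / (i`!)%:R.
Proof.
have derivn_shift j : (F \Po ('X + m%:P))^`(j) = F^`(j) \Po ('X + m%:P).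
  elim: j => [|j IH] //; rewrite !derivnS IH deriv_comp derivD derivX derivC.
  by rewrite addr0 mulr1.
apply/esym; have -> : (F^`(i)).[m] = ((F \Po ('X + m%:P))^`(i)).[0].
  by rewrite derivn_shift horner_comp hornerD hornerX hornerC add0r.
rewrite horner_coef0 coef_derivn addn0 ffactnn -[_ *+ i`!]mulr_natr mulfK //.
by rewrite pnatr_eq0 -lt0n fact_gt0.
Qed.

Lemma norm_taylor_term (R : numFieldType) (F : {poly R}) (m r : R) i :
  0 <= r ->
  `|(F^`(i)).[m] * r ^+ i / (i`!)%:R| = `|(F \Po ('X + m%:P))`_i| * r ^+ i.
Proof.
by move=> r_ge0; rewrite mulrAC -taylor_coef normrM (ger0_norm (exprn_ge0 i r_ge0)).
Qed.

Lemma comp_XaddC_prod_XsubC (R : comNzRingType) (m : R) (s : seq R) :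
  (\prod_(z <- s) ('X - z%:P)) \Po ('X + m%:P) = \prod_(z <- s) ('X - (z - m)%:P).
Proof.
rewrite rmorph_prod; apply: eq_bigr => z _ /=.
by rewrite comp_polyB comp_polyX comp_polyC polyCB opprB addrA.
Qed.

Lemma far_from_isolating_disk (C : numClosedFieldType) (n : nat) (m r z : C) :
  (0 < n)%N -> 0 <= r -> ~~ in_disk m (16 * n%:R ^+ 4 * r) z ->
  r <= 1 / (16 * n%:R) * `|z - m|.
Proof.
rewrite /in_disk => n_gt0 r_ge0 z_far.
have far : 16 * n%:R ^+ 4 * r <= `|z - m|.
  by rewrite real_leNgt ?z_far ?normr_real // ger0_real // !mulr_ge0 ?exprn_ge0.
rewrite mul1r mulrC ler_pdivlMr ?mulr_gt0 ?ltr0n //; apply: le_trans far.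
rewrite mulrC ler_wpM2r // ler_wpM2l // -natrX ler_nat.
by rewrite -[X in (X <= _)%N]expn1 leq_pexp2l.
Qed.

Theorem corollary3p3 (C : numClosedFieldType) (F : {poly C}) (n k : nat)
    (m r : C) :
  (2 <= n)%N -> size F = n.+1 -> 0 < r ->
  isolating F k m r (1 / (16 * n%:R)) (16 * n%:R ^+ 4) ->
  Tk k m r (3 / 2) F.
Proof.
move=> n_ge2 size_F r_gt0 [rs [F_eq [count_rs rs_split]]].
set d := 1 / (16 * n%:R) in count_rs rs_split.
have n_gt0 : (0 < n)%N by apply: leq_trans n_ge2.
have lcF_neq0 : lead_coef F != 0 by rewrite lead_coef_eq0 -size_poly_gt0 size_F.
have size_rs : size rs = n.
  move: (congr1 (fun p : {poly C} => size p) F_eq).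
  by rewrite /= size_scale // size_prod_XsubC size_F => -[].
have shifted_split a : a \in map (fun z => z - m) rs ->
    `|a| < d * r \/ r <= d * `|a|.
  case/mapP => z z_in ->; have [z_near | z_out] := boolP (in_disk m (d * r) z).
    by left.
  by right; apply: far_from_isolating_disk (rs_split z z_in z_out); rewrite ?ltW.
have := near_monomial_prod n.+1 r_gt0 shifted_split.
rewrite big_map count_map size_map size_rs -comp_XaddC_prod_XsubC.
rewrite (eq_count (a2 := in_disk m (d * r))) // count_rs => prod_near.
rewrite /Tk size_F /= norm_taylor_term ?(ltW r_gt0) //.
under eq_bigr => i _ do rewrite norm_taylor_term ?(ltW r_gt0) //.
apply: near_monomial_dominant (expr1D_inv16n_le _ n_gt0) _ => //.
  by rewrite ltnS -size_rs -count_rs count_size.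
by rewrite F_eq comp_polyZ; apply: near_monomial_scale.
Qed.
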